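(* Let $W$ be the Witt algebra, the complex Lie algebra with basis $\{x_n\mid n\in\mathbb{Z}\}$ and bracket $[x_m,x_n]=(n-m)x_{m+n}$. Any left-symmetric algebra structure on the underlying vector space of $W$ whose commutator $xy-yx$ equals the bracket of $W$ is simple, i.e. has no ideals other than $0$ and itself.
   Context: A left-symmetric algebra is a vector space with bilinear product satisfying $(xy)z-x(yz)=(yx)z-y(xz)$ for all $x,y,z$. An ideal is a subspace $I$ with $AI\subseteq I$ and $IA\subseteq I$. *)

From mathcomp Require Import all_boot all_order all_algebra.
From mathcomp Require Import complex.
From mathcomp Require Import Rstruct.
From Stdlib Require Import Reals.

Set Implicit Arguments.
Unset Strict Implicit.
Unset Printing Implicit Defensive.

Import Order.TTheory GRing.Theory Num.Theory.
Import ComplexField.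
Local Open Scope ring_scope.

Definition C : fieldType := (complex R : fieldType).

Definition lin_indep (V : lmodType C) (x : int -> V) : Prop :=
  forall (s : seq int) (c : int -> C), uniq s ->
    \sum_(n <- s) c n *: x n = 0 -> forall n, n \in s -> c n = 0.

Definition spanning (V : lmodType C) (x : int -> V) : Prop :=
  forall v : V, exists (s : seq int) (c : int -> C), v = \sum_(n <- s) c n *: x n.

Definition is_basis (V : lmodType C) (x : int -> V) : Prop :=
  lin_indep x /\ spanning x.

Definition bilinear_prod (V : lmodType C) (mul : V -> V -> V) : Prop :=
  (forall (a : C) (u v w : V), mul (a *: u + v) w = a *: mul u w + mul v w) /\
  (forall (a : C) (u v w : V), mul w (a *: u + v) = a *: mul w u + mul w v).

Definition left_symmetric (V : lmodType C) (mul : V -> V -> V) : Prop :=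
  forall x y z : V,
    mul (mul x y) z - mul x (mul y z) = mul (mul y x) z - mul y (mul x z).

(* (V, x) is the Witt algebra bracket realized by the commutator of mul:
   [x_m, x_n] = (n - m) x_{m+n}, i.e. xy - yx equals the Witt bracket
   (on basis vectors; by bilinearity this is the same as on all of V). *)
Definition commutator_is_witt (V : lmodType C) (x : int -> V)
    (mul : V -> V -> V) : Prop :=
  forall m n : int, mul (x m) (x n) - mul (x n) (x m) = (n - m)%:~R *: x (m + n).

Definition is_ideal (V : lmodType C) (mul : V -> V -> V) (I : V -> Prop) : Prop :=
  [/\ I 0,
      (forall u v, I u -> I v -> I (u + v)),
      (forall (a : C) u, I u -> I (a *: u)),
      (forall a u, I u -> I (mul a u)) &
      (forall a u, I u -> I (mul u a))].

Definition simple_alg (V : lmodType C) (mul : V -> V -> V) : Prop :=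
  forall I : V -> Prop, is_ideal mul I ->
    (forall v, I v -> v = 0) \/ (forall v, I v).

From mathcomp Require Import all_boot all_order all_algebra.
From mathcomp Require Import complex Rstruct zify ring.
From Stdlib Require Import Classical.
Set Implicit Arguments.
Unset Strict Implicit.
Unset Printing Implicit Defensive.
Local Open Scope ring_scope.
Import GRing.Theory Num.Theory.

(* A nonzero ideal
   is stable under ad x_0 - n for every scalar n, and ad x_0 acts on x_k by k; applying
   ad x_0 - n_0 kills the x_{n_0}-component of an element without creating
   new ones, so shrinking the support yields some x_n in the ideal.  Then
   [x_{k-n}, x_n] = (2n - k) x_k puts x_0, and from it every x_k, in it. *)

Lemma intC_eq0 (k : int) : ((k%:~R : C) == 0) = (k == 0).
Proof. exact: (@intr_eq0 (complex Rdefinitions.R)). Qed.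

Definition lie_bracket (V : lmodType C) (mul : V -> V -> V) (u v : V) : V :=
  mul u v - mul v u.

Section BilinearProduct.

Variables (V : lmodType C) (mul : V -> V -> V).
Hypothesis mulP : bilinear_prod mul.

Lemma bilin_mul0r w : mul 0 w = 0.
Proof.
have := mulP.1 1 0 0 w; rewrite !scale1r addr0 => h.
by apply: (@addrI _ (mul 0 w)); rewrite addr0 -h.
Qed.

Lemma bilin_mulr0 w : mul w 0 = 0.
Proof.
have := mulP.2 1 0 0 w; rewrite !scale1r addr0 => h.
by apply: (@addrI _ (mul w 0)); rewrite addr0 -h.
Qed.

Lemma bilin_mulr_comb (J : Type) (s : seq J) (c : J -> C) (F : J -> V) w :
  mul w (\sum_(j <- s) c j *: F j) = \sum_(j <- s) c j *: mul w (F j).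
Proof.
elim: s => [|j s IHs]; first by rewrite !big_nil bilin_mulr0.
by rewrite !big_cons mulP.2 IHs.
Qed.

Lemma bilin_mull_comb (J : Type) (s : seq J) (c : J -> C) (F : J -> V) w :
  mul (\sum_(j <- s) c j *: F j) w = \sum_(j <- s) c j *: mul (F j) w.
Proof.
elim: s => [|j s IHs]; first by rewrite !big_nil bilin_mul0r.
by rewrite !big_cons mulP.1 IHs.
Qed.

End BilinearProduct.

Section Ideal.

Variables (V : lmodType C) (mul : V -> V -> V) (I : V -> Prop).
Hypothesis idealI : is_ideal mul I.

Lemma idealZ (a : C) u : I u -> I (a *: u).
Proof. by case: idealI => _ _ IZ _ _; apply: IZ. Qed.

Lemma idealB u v : I u -> I v -> I (u - v).
Proof.
case: idealI => _ ID IZ _ _ Iu Iv.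
by apply: ID => //; rewrite -scaleN1r; apply: IZ.
Qed.

Lemma ideal_lie_bracket a u : I u -> I (lie_bracket mul a u).
Proof. by case: idealI => _ _ _ IL IR Iu; apply: idealB; [apply: IL | apply: IR]. Qed.

Lemma ideal_unscale (a : C) u : a != 0 -> I (a *: u) -> I u.
Proof.
case: idealI => _ _ IZ _ _ a0 /(IZ a^-1).
by rewrite scalerA mulVf // scale1r.
Qed.

Lemma ideal_comb (J : Type) (s : seq J) (c : J -> C) (F : J -> V) :
  (forall j, I (F j)) -> I (\sum_(j <- s) c j *: F j).
Proof.
case: idealI => I0 ID IZ _ _ IF.
elim: s => [|j s IHs]; first by rewrite big_nil.
by rewrite big_cons; apply: ID => //; apply: IZ.
Qed.

End Ideal.

Lemma spanning_uniq (V : lmodType C) (x : int -> V) v : spanning x ->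
  exists s (c : int -> C), uniq s /\ v = \sum_(n <- s) c n *: x n.
Proof.
move=> /(_ v) [s [c ->]].
exists (undup s), (fun n => c n *+ count_mem n s); split; first exact: undup_uniq.
rewrite -big_undup_iterop_count; apply: eq_bigr => n _.
by rewrite Monoid.iteropE iter_addr_0 scalerMnl.
Qed.

Section WittCommutator.

Variables (V : lmodType C) (x : int -> V) (mul : V -> V -> V).
Hypotheses (mulP : bilinear_prod mul) (wittP : commutator_is_witt x mul).

Lemma lie_bracket_x0_comb s (c : int -> C) :
  lie_bracket mul (x 0) (\sum_(n <- s) c n *: x n)
  = \sum_(n <- s) (c n * n%:~R) *: x n.
Proof.
rewrite /lie_bracket (bilin_mulr_comb mulP) (bilin_mull_comb mulP) -sumrB.
apply: eq_bigr => n _.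
by rewrite -scalerBr wittP subr0 add0r scalerA.
Qed.

Variable I : V -> Prop.
Hypothesis idealI : is_ideal mul I.

Lemma witt_ideal_basis_step n k : I (x n) -> k != n + n -> I (x k).
Proof.
move=> In kn; have := ideal_lie_bracket idealI (x (k - n)) In.
rewrite /lie_bracket wittP subrK; apply: (ideal_unscale idealI).
by rewrite intC_eq0; apply: contra kn => /eqP h; apply/eqP; lia.
Qed.

Lemma witt_ideal_all_basis n : I (x n) -> forall k, I (x k).
Proof.
move=> In k.
have Ix0 : I (x 0).
  have [<- // | n0] := eqVneq n 0.
  by apply: (witt_ideal_basis_step In); apply/eqP; lia.
have [-> // | k0] := eqVneq k 0.
by apply: (witt_ideal_basis_step Ix0); rewrite addr0.
Qed.

Hypothesis indepx : lin_indep x.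

Lemma witt_ideal_has_basis s (c : int -> C) : uniq s ->
  I (\sum_(n <- s) c n *: x n) -> \sum_(n <- s) c n *: x n != 0 ->
  exists n, I (x n).
Proof.
elim: s c => [|n0 s IHs] c; first by rewrite big_nil eqxx.
move=> /= /andP[n0s us] Iv v0.
pose c' n := c n * (n - n0)%:~R.
have shift_eq : lie_bracket mul (x 0) (\sum_(n <- n0 :: s) c n *: x n)
      - n0%:~R *: \sum_(n <- n0 :: s) c n *: x n
    = \sum_(n <- s) c' n *: x n.
  rewrite lie_bracket_x0_comb scaler_sumr -sumrB big_cons /c' /=.
  rewrite scalerA -scalerBl [n0%:~R * _]mulrC subrr scale0r add0r.
  by apply: eq_bigr => n _; rewrite scalerA -scalerBl intrB; congr (_ *: _); ring.
have [w0 | w0] := eqVneq (\sum_(n <- s) c' n *: x n) 0; last first.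
  apply: (IHs c') => //; rewrite -shift_eq.
  apply: (idealB idealI); first exact: (ideal_lie_bracket idealI).
  exact: (idealZ idealI).
have c_tail n : n \in s -> c n = 0.
  move=> ns; move/eqP: (indepx us w0 ns); rewrite mulf_eq0 intC_eq0 subr_eq0.
  by case/orP=> [/eqP // | /eqP en]; rewrite -en ns in n0s.
have v_eq : \sum_(n <- n0 :: s) c n *: x n = c n0 *: x n0.
  by rewrite big_cons big1_seq ?addr0 // => n /andP[_ /c_tail ->]; rewrite scale0r.
exists n0; rewrite v_eq in Iv v0; apply: (ideal_unscale idealI) Iv.
by apply: contra v0 => /eqP ->; rewrite scale0r.
Qed.

End WittCommutator.

Theorem proposition2p4 (V : lmodType C) (x : int -> V) (mul : V -> V -> V) :
  is_basis x ->
  bilinear_prod mul ->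
  left_symmetric mul ->
  commutator_is_witt x mul ->
  simple_alg mul.
Proof.
move=> [indepx spanx] mulP _ wittP I idealI.
have [[v [Iv v0]] | I_zero] := classic (exists v, I v /\ v <> 0); last first.
  by left=> v Iv; apply: NNPP => v0; apply: I_zero; exists v.
right=> w.
have [s [c [us v_eq]]] := spanning_uniq v spanx.
rewrite v_eq in Iv v0.
have [n In] := witt_ideal_has_basis mulP wittP idealI indepx us Iv (introN eqP v0).
have [s' [c' [_ ->]]] := spanning_uniq w spanx.
have Ix := witt_ideal_all_basis wittP idealI In.
exact: (ideal_comb idealI s' c' Ix : I (\sum_(n <- s') c' n *: x n)).
Qed.
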